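(* For every finite simple graph $G$, $\operatorname{sdim}(G+K_1)>\operatorname{sdim}G$.
   Context: $G+K_1$ is $G$ together with one new vertex adjacent to all vertices of $G$. A unit-distance embedding of a graph $G$ in $\mathbb{R}^n$ is an injective map $f$ from the vertex set of $G$ to $\mathbb{R}^n$ such that $|f(u)-f(v)|=1$ for every edge $uv$ and no point $f(w)$ lies on the segment $[f(u),f(v)]$ for an edge $uv$ with $w\notin\{u,v\}$. $G$ admits a spherical embedding of dimension $k$ and radius $r$ if $G$ has a unit-distance embedding in $\mathbb{R}^k$ all of whose vertices lie on a sphere $\{x\in\mathbb{R}^k:|x-c|=r\}$. The spherical dimension $\operatorname{sdim}G$ is the least $k$ such that $G$ admits a spherical embedding of dimension $k$ and some radius $r<1$; by convention $\operatorname{sdim}$ of the graph with no vertices is $-\infty$ and $\operatorname{sdim}K_1=0$. *)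

From HB Require Import structures.
From mathcomp Require Import all_boot all_order all_algebra.
From mathcomp Require Import boolp Rstruct.
From Stdlib Require Rdefinitions.
Set Implicit Arguments. Unset Strict Implicit. Unset Printing Implicit Defensive.
Import Order.TTheory GRing.Theory Num.Theory.
Local Open Scope ring_scope.

Notation Real := Rdefinitions.R.

Definition simple_graph (T : finType) (e : rel T) : Prop :=
  symmetric e /\ irreflexive e.

Definition plusK1 (T : finType) (e : rel T) : rel (option T) :=
  fun x y => match x, y with
             | Some a, Some b => e a b
             | None, Some _ | Some _, None => true
             | None, None => false
             end.

Definition sqdist (k : nat) (x y : 'rV[Real]_k) : Real :=
  \sum_(i < k) (x ord0 i - y ord0 i) ^+ 2.

Definition on_segment (k : nat) (p a b : 'rV[Real]_k) : Prop :=
  exists t : Real, 0 <= t <= 1 /\ p = (1 - t) *: a + t *: b.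

Definition unit_dist_embedding (T : finType) (e : rel T) (k : nat)
  (f : T -> 'rV[Real]_k) : Prop :=
  injective f /\
  (forall u v, e u v -> sqdist (f u) (f v) = 1) /\
  (forall u v w, e u v -> w != u -> w != v -> ~ on_segment (f w) (f u) (f v)).

Definition spherical_embedding (T : finType) (e : rel T) (k : nat) (r : Real)
  : Prop :=
  0 <= r /\ exists (f : T -> 'rV[Real]_k) (c : 'rV[Real]_k),
    unit_dist_embedding e f /\ forall v, sqdist (f v) c = r ^+ 2.

Definition sdim_admissible (T : finType) (e : rel T) (k : nat) : Prop :=
  exists r : Real, r < 1 /\ spherical_embedding e k r.

(* Spherical dimension; None encodes -oo (graph with no vertices). When no
   admissible dimension exists (does not happen for finite graphs) the value
   defaults to Some 0. *)
Definition sdim (T : finType) (e : rel T) : option nat :=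
  if #|T| == 0%N :> nat then None else
  match pselect (exists k, `[< sdim_admissible e k >]) with
  | left H => Some (ex_minn H)
  | right _ => Some 0%N
  end.

Definition olt (a b : option nat) : bool :=
  match a, b with
  | None, Some _ => true
  | Some m, Some n => ltn m n
  | _, None => false
  end.

From HB Require Import structures.
From mathcomp Require Import all_boot all_order all_algebra ring lra.
From mathcomp Require Import boolp Rstruct.
Set Implicit Arguments. Unset Strict Implicit. Unset Printing Implicit Defensive.
Import Order.TTheory GRing.Theory Num.Theory.
Local Open Scope ring_scope.

(* Let f be a spherical embedding of G + K_1 in R^k with centre c and radius
   r < 1, and let p = f(apex).  Every vertex q of G lies on the sphere and at
   distance 1 from p, so  <q - c, p - c> = (2r^2 - 1)/2  is the same for all
   of them.  A Householder reflection sends p - c to r e_k; after it, all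
   images of vertices of G share the last coordinate h = (2r^2-1)/(2r).
   Dropping that coordinate is therefore isometric on them and reflects the
   "lies on a segment" relation, so it yields a spherical embedding of G in
   R^(k-1) of radius sqrt(r^2 - h^2) <= r < 1 (lemma [cone_admissible]).
   Admissible dimensions exist for every graph (the regular simplex,
   [simplex_admissible]), so both spherical dimensions are minima of
   nonempty sets and the theorem follows. *)

Section InnerProduct.
Variables (R : realFieldType) (k : nat).
Implicit Types (x y z w : 'rV[R]_k).

Definition dot x y : R := \sum_(i < k) x ord0 i * y ord0 i.

Lemma dotC x y : dot x y = dot y x.
Proof. by apply: eq_bigr => i _; rewrite mulrC. Qed.

Lemma dotDl x y z : dot (x + y) z = dot x z + dot y z.
Proof. by rewrite /dot -big_split /=; apply: eq_bigr => i _; rewrite mxE mulrDl. Qed.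

Lemma dotZl a x z : dot (a *: x) z = a * dot x z.
Proof. by rewrite /dot mulr_sumr; apply: eq_bigr => i _; rewrite mxE mulrA. Qed.

Lemma dotBl x y z : dot (x - y) z = dot x z - dot y z.
Proof. by rewrite -scaleN1r dotDl dotZl mulN1r. Qed.

Lemma dotBr x y z : dot z (x - y) = dot z x - dot z y.
Proof. by rewrite dotC dotBl !(dotC z). Qed.

Lemma dotZr a x z : dot z (a *: x) = a * dot z x.
Proof. by rewrite dotC dotZl dotC. Qed.

Lemma dot0r x : dot x 0 = 0.
Proof. by rewrite /dot big1 // => i _; rewrite mxE mulr0. Qed.

Lemma dot_ge0 x : 0 <= dot x x.
Proof. by apply: sumr_ge0 => i _; rewrite -expr2 sqr_ge0. Qed.

Lemma dot_eq0 x : dot x x = 0 -> x = 0.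
Proof.
move=> x0; apply/rowP => i; rewrite mxE; apply/eqP; rewrite -sqrf_eq0.
have sq_ge0 j : true -> 0 <= x ord0 j ^+ 2 by rewrite sqr_ge0.
have sum_sq0 : \sum_(j < k) x ord0 j ^+ 2 = 0.
  by rewrite -[RHS]x0; apply: eq_bigr => j _; rewrite expr2.
exact/eqP/(psumr_eq0P sq_ge0).
Qed.

Lemma dotBB x y : dot (x - y) (x - y) = dot x x - 2 * dot x y + dot y y.
Proof. rewrite !(dotBl, dotBr) (dotC y x); ring. Qed.

(* The reflection of R^k in the hyperplane orthogonal to w (the identity
   when w = 0). *)
Definition mirror w y : 'rV[R]_k := y - (2 * dot y w / dot w w) *: w.

Lemma mirror_comb w a b x y :
  mirror w (a *: x + b *: y) = a *: mirror w x + b *: mirror w y.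
Proof. by apply/rowP => i; rewrite /mirror dotDl !dotZl !mxE; ring. Qed.

Lemma mirrorB w x y : mirror w (x - y) = mirror w x - mirror w y.
Proof. by rewrite -[x]scale1r -scaleN1r mirror_comb !scale1r !scaleN1r. Qed.

Lemma mirror_dot w x y : dot (mirror w x) (mirror w y) = dot x y.
Proof.
rewrite /mirror !(dotBl, dotBr, dotZl, dotZr).
have [->|w0] := eqVneq (dot w w) 0; first by rewrite invr0 !mulr0 !mul0r; ring.
by rewrite (dotC w y); field.
Qed.

Lemma mirror_swap u a : dot u u = dot a a -> mirror (u - a) u = a.
Proof.
move=> uu; rewrite /mirror.
have [/dot_eq0 /eqP|w0] := eqVneq (dot (u - a) (u - a)) 0.
  by rewrite subr_eq0 => /eqP ->; rewrite subrr scaler0 subr0.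
suff -> : 2 * dot u (u - a) = dot (u - a) (u - a) by rewrite divff // scale1r subKr.
by rewrite dotBr dotBB uu; ring.
Qed.

End InnerProduct.

Section LastCoordinate.
Variables (R : realFieldType) (k : nat).
Implicit Types (x y : 'rV[R]_k.+1).

Definition proj y : 'rV[R]_k := \row_(i < k) y ord0 (widen_ord (leqnSn k) i).
Definition lastc y : R := y ord0 ord_max.

Definition axis : 'rV[R]_k.+1 := \row_(i < k.+1) (i == ord_max)%:R.

Lemma dot_split x y : dot x y = dot (proj x) (proj y) + lastc x * lastc y.
Proof. by rewrite /dot big_ord_recr /=; congr (_ + _); apply: eq_bigr => i _; rewrite !mxE. Qed.

Lemma projB x y : proj (x - y) = proj x - proj y.
Proof. by apply/rowP => i; rewrite !mxE. Qed.

Lemma lastcB x y : lastc (x - y) = lastc x - lastc y.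
Proof. by rewrite /lastc !mxE. Qed.

Lemma dot_axis x a : dot x (a *: axis) = a * lastc x.
Proof.
rewrite dot_split (_ : proj (a *: axis) = 0) ?dot0r ?add0r; last first.
  by apply/rowP => i; rewrite !mxE -(inj_eq val_inj) /= ltn_eqF ?mulr0.
by rewrite /lastc !mxE eqxx mulr1 mulrC.
Qed.

End LastCoordinate.
Arguments axis {R k}.

Lemma sqdist_dot k (x y : 'rV[Real]_k) : sqdist x y = dot (x - y) (x - y).
Proof. by apply: eq_bigr => i _; rewrite !mxE expr2. Qed.

Lemma sqdist_refl k (x : 'rV[Real]_k) : sqdist x x = 0.
Proof. by rewrite sqdist_dot subrr dot0r. Qed.

Lemma sqdist0 k (x y : 'rV[Real]_k) : sqdist x y = 0 -> x = y.
Proof. by rewrite sqdist_dot => /dot_eq0 /eqP; rewrite subr_eq0 => /eqP. Qed.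

Lemma isometry_on_segment k k' (psi : 'rV[Real]_k -> 'rV[Real]_k') x y z :
  (forall x y, sqdist (psi x) (psi y) = sqdist x y) ->
  (forall t x y, psi ((1 - t) *: x + t *: y) = (1 - t) *: psi x + t *: psi y) ->
  on_segment (psi x) (psi y) (psi z) -> on_segment x y z.
Proof.
move=> psi_dist psi_comb [t [t01 xE]]; exists t; split => //.
by apply: sqdist0; rewrite -psi_dist psi_comb -xE sqdist_refl.
Qed.

Lemma proj_sqdist k (x y : 'rV[Real]_k.+1) :
  lastc x = lastc y -> sqdist (proj x) (proj y) = sqdist x y.
Proof.
by move=> xy; rewrite !sqdist_dot [RHS]dot_split projB lastcB xy subrr mulr0 addr0.
Qed.

Lemma proj_norm k (x : 'rV[Real]_k.+1) :
  sqdist (proj x) 0 = sqdist x 0 - lastc x ^+ 2.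
Proof. by rewrite !sqdist_dot !subr0 [in RHS]dot_split expr2 addrK. Qed.

Lemma proj_on_segment k (x y z : 'rV[Real]_k.+1) :
  lastc x = lastc y -> lastc z = lastc y ->
  on_segment (proj x) (proj y) (proj z) -> on_segment x y z.
Proof.
move=> xy zy [t [t01 /rowP xE]]; exists t; split => //; apply/rowP => i.
have [j ->|->] := unliftP ord_max i.
  have -> : lift ord_max j = widen_ord (leqnSn k) j.
    by apply: val_inj; rewrite /= /bump leqNgt ltn_ord.
  by have := xE j; rewrite !mxE.
by move: xy zy; rewrite !mxE /lastc => -> ->; ring.
Qed.

Lemma embedding_transfer (S : finType) (e : rel S) k k'
    (f : S -> 'rV[Real]_k) (phi : 'rV[Real]_k -> 'rV[Real]_k') :
  (forall u v, sqdist (phi (f u)) (phi (f v)) = sqdist (f u) (f v)) ->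
  (forall u v w, on_segment (phi (f w)) (phi (f u)) (phi (f v)) ->
                 on_segment (f w) (f u) (f v)) ->
  unit_dist_embedding e f -> unit_dist_embedding e (phi \o f).
Proof.
move=> phi_dist phi_seg [f_inj [f_edge f_seg]]; split; [|split].
- move=> u v /= uv; apply/f_inj/sqdist0.
  by rewrite -phi_dist uv sqdist_refl.
- by move=> u v uv /=; rewrite phi_dist f_edge.
- by move=> u v w uv wu wv /phi_seg; apply: f_seg.
Qed.

Lemma embedding_restrict (T : finType) (e : rel T) k (f : option T -> 'rV[Real]_k) :
  unit_dist_embedding (plusK1 e) f -> unit_dist_embedding e (f \o Some).
Proof.
move=> [f_inj [f_edge f_seg]]; split; [|split].
- by move=> u v /f_inj [].
- by move=> u v /(f_edge (Some u) (Some v)).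
- move=> u v w uv wu wv; apply: (f_seg (Some u) (Some v) (Some w) uv);
    by rewrite (inj_eq (@Some_inj _)).
Qed.

(* Every loopless graph admits a spherical embedding of radius 1/sqrt 2:
   its vertices placed at the scaled unit vectors of R^#|S|. *)
Lemma simplex_admissible (S : finType) (e : rel S) :
  irreflexive e -> sdim_admissible e #|S|.
Proof.
move=> irr; pose s : Real := Num.sqrt (1 / 2).
have s2 : s ^+ 2 = 1 / 2 by rewrite sqr_sqrtr //; lra.
have s_gt0 : 0 < s by rewrite sqrtr_gt0; lra.
pose f (v : S) : 'rV[Real]_#|S| := \row_i (if i == enum_rank v then s else 0).
have rank_neq (u v : S) : u != v -> (enum_rank u == enum_rank v) = false.
  by move=> uv; apply/negbTE; rewrite (inj_eq enum_rank_inj).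
exists s; split; first by nra.
split; first exact: ltW.
exists f, 0; split; last first.
  move=> v; rewrite /sqdist (bigD1 (enum_rank v)) //= big1 => [|j /negbTE jv].
    by rewrite !mxE eqxx subr0 addr0.
  by rewrite !mxE jv subr0 expr0n.
split; [|split].
- move=> u v /rowP /(_ (enum_rank u)); rewrite !mxE eqxx (inj_eq enum_rank_inj).
  by case: eqP => // _ /eqP; rewrite gt_eqF.
- move=> u v uv; have /rank_neq ruv : u != v by apply: contraTneq uv => ->; rewrite irr.
  rewrite /sqdist (bigD1 (enum_rank u)) // (bigD1 (enum_rank v)) /=; last by rewrite eq_sym ruv.
  rewrite big1 => [|j /andP [ju jv]].
    by rewrite !mxE eqxx ruv eq_sym ruv eqxx; lra.
  by rewrite !mxE (negbTE ju) (negbTE jv) subr0 expr0n.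
- move=> u v w _ /rank_neq wu /rank_neq wv [t [_ /rowP /(_ (enum_rank w))]].
  rewrite !mxE eqxx wu wv !mulr0 addr0 => /eqP.
  by rewrite gt_eqF.
Qed.

Lemma apex_dot k (c p q : 'rV[Real]_k) r :
  sqdist p c = r ^+ 2 -> sqdist q c = r ^+ 2 -> sqdist q p = 1 ->
  dot (q - c) (p - c) = (2 * r ^+ 2 - 1) / 2.
Proof.
move=> pc qc; have qpE : q - p = (q - c) - (p - c) by rewrite opprB addrA subrK.
by rewrite sqdist_dot qpE dotBB -!sqdist_dot qc pc; lra.
Qed.

Section Alignment.
Variables (k : nat) (c p : 'rV[Real]_k.+1) (r : Real).

(* The rigid motion moving c to the origin and the radius p - c (of length
   r) onto the last axis. *)
Definition align (y : 'rV[Real]_k.+1) : 'rV[Real]_k.+1 :=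
  mirror (p - c - r *: axis) (y - c).

Lemma align_sqdist x y : sqdist (align x) (align y) = sqdist x y.
Proof. by rewrite !sqdist_dot -mirrorB mirror_dot opprB addrA subrK. Qed.

Lemma align_norm y : sqdist (align y) 0 = sqdist y c.
Proof. by rewrite !sqdist_dot !subr0 mirror_dot. Qed.

Lemma align_comb t x y :
  align ((1 - t) *: x + t *: y) = (1 - t) *: align x + t *: align y.
Proof.
rewrite /align -mirror_comb; congr (mirror _ _).
by apply/rowP => i; rewrite !mxE; ring.
Qed.

Lemma align_level q : r != 0 -> sqdist p c = r ^+ 2 ->
  sqdist q c = r ^+ 2 -> sqdist q p = 1 ->
  lastc (align q) = (2 * r ^+ 2 - 1) / (2 * r).
Proof.
move=> r_ne0 pc qc qp.
have lastc_ra : lastc (r *: axis : 'rV[Real]_k.+1) = r by rewrite /lastc !mxE eqxx mulr1.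
have apex : mirror (p - c - r *: axis) (p - c) = r *: axis.
  by apply: mirror_swap; rewrite dot_axis lastc_ra -sqdist_dot pc expr2.
have : dot (align q) (r *: axis) = dot (q - c) (p - c) by rewrite -apex mirror_dot.
rewrite dot_axis (apex_dot pc qc qp) => levelE.
by apply: (mulfI r_ne0); rewrite levelE; field.
Qed.

End Alignment.

Lemma cone_admissible (T : finType) (e : rel T) k (x0 : T) :
  sdim_admissible (plusK1 e) k -> exists k', k = k'.+1 /\ sdim_admissible e k'.
Proof.
move=> [r [r_lt1 [r_ge0 [f [c [f_emb f_sph]]]]]].
have apex_ne v : f None <> f (Some v) by move/f_emb.1.
case: k f c f_emb f_sph apex_ne => [|k] f c f_emb f_sph apex_ne.
  by case: (apex_ne x0); apply/rowP => -[].
have r_ne0 : r != 0.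
  apply/eqP => r0; apply: (apex_ne x0).
  have at_centre v : f v = c by apply: sqdist0; rewrite f_sph r0 expr0n.
  by rewrite !at_centre.
(* Align the sphere so that the apex sits on the last axis, then forget the
   last coordinate, which is the constant h on the vertices of G. *)
pose h := (2 * r ^+ 2 - 1) / (2 * r).
pose phi y := proj (align c (f None) r y).
have level v : lastc (align c (f None) r (f (Some v))) = h.
  by apply: align_level; rewrite ?f_sph // (f_emb.2.1 (Some v) None).
have phi_dist u v :
    sqdist (phi (f (Some u))) (phi (f (Some v))) = sqdist (f (Some u)) (f (Some v)).
  by rewrite proj_sqdist ?level // align_sqdist.
have phi_seg u v w : on_segment (phi (f (Some w))) (phi (f (Some u))) (phi (f (Some v))) ->
    on_segment (f (Some w)) (f (Some u)) (f (Some v)).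
  move/proj_on_segment; rewrite !level => /(_ erefl erefl).
  by apply: isometry_on_segment; [exact: align_sqdist | exact: align_comb].
have phi_norm v : sqdist (phi (f (Some v))) 0 = r ^+ 2 - h ^+ 2.
  by rewrite proj_norm align_norm f_sph level.
have rh_ge0 : 0 <= r ^+ 2 - h ^+ 2 by rewrite -(phi_norm x0) sqdist_dot dot_ge0.
exists k; split=> //; exists (Num.sqrt (r ^+ 2 - h ^+ 2)).
have s2 : Num.sqrt (r ^+ 2 - h ^+ 2) ^+ 2 = r ^+ 2 - h ^+ 2 by rewrite sqr_sqrtr.
have s_ge0 : 0 <= Num.sqrt (r ^+ 2 - h ^+ 2) by exact: sqrtr_ge0.
have h2_ge0 : 0 <= h ^+ 2 by exact: sqr_ge0.
split; first by nra.
split=> //; exists (phi \o (f \o Some)), 0; split; last by move=> v; rewrite /= phi_norm s2.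
exact: embedding_transfer (embedding_restrict f_emb).
Qed.

Lemma sdimP (T : finType) (e : rel T) k :
  (0 < #|T|)%N -> sdim_admissible e k ->
  exists m, [/\ sdim e = Some m, (m <= k)%N & sdim_admissible e m].
Proof.
move=> T_gt0 adm; rewrite /sdim eqn0Ngt T_gt0 /=.
case: pselect => [ex | []]; last by exists k; apply/asboolP.
case: ex_minnP => m /asboolP adm_m min_m.
by exists m; split=> //; apply/min_m/asboolP.
Qed.

Theorem mainTheorem12 (T : finType) (e : rel T) :
  simple_graph e -> olt (sdim e) (sdim (plusK1 e)).
Proof.
move=> [_ irr].
have irrK : irreflexive (plusK1 e) by case=> /=.
have card_gt0 : (0 < #|{: option T}|)%N by rewrite card_option.
have [m [-> _ adm_m]] := sdimP card_gt0 (simplex_admissible irrK).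
case: (posnP #|T|) => [T0 | T_gt0]; first by rewrite /sdim T0.
have /card_gt0P [x0 _] := T_gt0.
have [m' [mE adm']] := cone_admissible x0 adm_m.
have [n [-> le_nm _]] := sdimP T_gt0 adm'.
by rewrite mE /= ltnS.
Qed.
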